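(* For every command $c$ of the While-language, store $\sigma$ and outcome $o$: if $(c,\sigma)\Downarrow^{co}o$ and not $(c,\sigma)\Downarrow o$, then $(c,\sigma)\Downarrow^{co}\mathsf{div}$.
   Context: While-language syntax: variables $x$ range over a countably infinite set $\mathit{Var}$; $n$ ranges over natural numbers; values are $v ::= \mathsf{null}\mid n$ ($\mathsf{null}$ distinct from every natural number); expressions are $e ::= v\mid x\mid e_1\oplus e_2$ with $\oplus\in\{+,-,*\}$, where $\oplus(n_1,n_2)$ is the result of the operation on naturals; commands are $c ::= \mathsf{skip}\mid\mathsf{alloc}\ x\mid x:=e\mid c_1;c_2\mid \mathsf{if}\ e\ c_1\ c_2\mid\mathsf{while}\ e\ c$. A store $\sigma$ is a finite partial map from $\mathit{Var}$ to values, with domain $\mathrm{dom}(\sigma)$, lookup $\sigma(x)$, update $\sigma[x\mapsto v]$. Expression evaluation $(e,\sigma)\Rightarrow_E v$ is the least relation with: $(v,\sigma)\Rightarrow_E v$; $(x,\sigma)\Rightarrow_E\sigma(x)$ if $x\in\mathrm{dom}(\sigma)$; if $(e_1,\sigma)\Rightarrow_E n_1$ and $(e_2,\sigma)\Rightarrow_E n_2$ with $n_1,n_2$ naturals then $(e_1\oplus e_2,\sigma)\Rightarrow_E\oplus(n_1,n_2)$. Pretty-big-step semantics: outcomes $o ::= \mathsf{conv}\ \sigma\mid\mathsf{div}$; semantic commands $C ::= c\mid\mathsf{assign2}\ x\ v\mid\mathsf{seq2}\ o\ c\mid\mathsf{if2}\ v\ c\ c\mid\mathsf{while2}\ v\ e\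 c\mid\mathsf{while3}\ o\ e\ c$. The rules for judgments $(C,\sigma)\Downarrow o$ are: $(\mathsf{skip},\sigma)\Downarrow\mathsf{conv}\ \sigma$; $(\mathsf{alloc}\ x,\sigma)\Downarrow\mathsf{conv}\ \sigma[x\mapsto\mathsf{null}]$ if $x\notin\mathrm{dom}(\sigma)$; $(x:=e,\sigma)\Downarrow o$ if $(e,\sigma)\Rightarrow_E v$ and $(\mathsf{assign2}\ x\ v,\sigma)\Downarrow o$; $(\mathsf{assign2}\ x\ v,\sigma)\Downarrow\mathsf{conv}\ \sigma[x\mapsto v]$ if $x\in\mathrm{dom}(\sigma)$; $(c_1;c_2,\sigma)\Downarrow o$ if $(c_1,\sigma)\Downarrow o_1$ and $(\mathsf{seq2}\ o_1\ c_2,\sigma)\Downarrow o$; $(\mathsf{seq2}\ (\mathsf{conv}\ \sigma)\ c,\sigma_0)\Downarrow o$ if $(c,\sigma)\Downarrow o$; $(\mathsf{if}\ e\ c_1\ c_2,\sigma)\Downarrow o$ if $(e,\sigma)\Rightarrow_E v$ and $(\mathsf{if2}\ v\ c_1\ c_2,\sigma)\Downarrow o$; $(\mathsf{if2}\ v\ c_1\ c_2,\sigma)\Downarrow o_1$ if $v\ne0$ and $(c_1,\sigma)\Downarrow o_1$; $(\mathsf{if2}\ 0\ c_1\ c_2,\sigma)\Downarrow o_2$ if $(c_2,\sigma)\Downarrow o_2$; $(\mathsf{while}\ e\ c,\sigma)\Downarrow o$ if $(e,\sigma)\Rightarrow_E v$ and $(\mathsf{while2}\ v\ e\ c,\sigma)\Downarrow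 o$; $(\mathsf{while2}\ v\ e\ c,\sigma)\Downarrow o'$ if $v\ne0$, $(c,\sigma)\Downarrow o$ and $(\mathsf{while3}\ o\ e\ c,\sigma)\Downarrow o'$; $(\mathsf{while2}\ 0\ e\ c,\sigma)\Downarrow\mathsf{conv}\ \sigma$; $(\mathsf{while3}\ (\mathsf{conv}\ \sigma)\ e\ c,\sigma_0)\Downarrow o$ if $(\mathsf{while}\ e\ c,\sigma)\Downarrow o$; $(\mathsf{seq2}\ \mathsf{div}\ c_2,\sigma)\Downarrow\mathsf{div}$; $(\mathsf{while3}\ \mathsf{div}\ e\ c,\sigma)\Downarrow\mathsf{div}$. $\Downarrow$ is the inductive interpretation (least relation closed under the rules); $\Downarrow^{co}$ is the coinductive interpretation of the same rules (greatest relation such that every element is the conclusion of a rule instance whose $\Downarrow$-premises lie in it; $\Rightarrow_E$ premises keep their meaning). *)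

From mathcomp Require Import all_boot finmap.

Set Implicit Arguments.
Unset Strict Implicit.
Unset Printing Implicit Defensive.

Local Open Scope fmap_scope.

Definition var := nat.

Notation value := (option nat).
Notation vnull := (@None nat).
Notation vnat n := (@Some nat n).

Inductive binop := Oplus | Ominus | Otimes.

Definition apply_op (op : binop) (n1 n2 : nat) : nat :=
  match op with
  | Oplus => n1 + n2
  | Ominus => n1 - n2   (* subtraction on naturals (truncated) *)
  | Otimes => n1 * n2
  end.

Inductive expr :=
  | Eval : value -> expr
  | Evar : var -> expr
  | Eop : binop -> expr -> expr -> expr.

Inductive cmd :=
  | Cskip : cmd
  | Calloc : var -> cmd
  | Cassign : var -> expr -> cmd
  | Cseq : cmd -> cmd -> cmd
  | Cif : expr -> cmd -> cmd -> cmd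
  | Cwhile : expr -> cmd -> cmd.

Definition store := {fmap var -> value}.

Inductive eval_expr : expr -> store -> value -> Prop :=
  | EEval : forall v sigma, eval_expr (Eval v) sigma v
  | EEvar : forall x sigma (Hx : x \in domf sigma),
      eval_expr (Evar x) sigma (sigma.[Hx])
  | EEop : forall op e1 e2 sigma n1 n2,
      eval_expr e1 sigma (vnat n1) -> eval_expr e2 sigma (vnat n2) ->
      eval_expr (Eop op e1 e2) sigma (vnat (apply_op op n1 n2)).

Inductive outcome :=
  | Oconv : store -> outcome
  | Odiv : outcome.

Inductive scmd :=
  | SC : cmd -> scmd
  | Sassign2 : var -> value -> scmd
  | Sseq2 : outcome -> cmd -> scmd
  | Sif2 : value -> cmd -> cmd -> scmd
  | Swhile2 : value -> expr -> cmd -> scmd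
  | Swhile3 : outcome -> expr -> cmd -> scmd.

Inductive bigstep : scmd -> store -> outcome -> Prop :=
  | BSkip : forall sigma, bigstep (SC Cskip) sigma (Oconv sigma)
  | BAlloc : forall x sigma, x \notin domf sigma ->
      bigstep (SC (Calloc x)) sigma (Oconv sigma.[x <- vnull])
  | BAssign : forall x e sigma v o, eval_expr e sigma v ->
      bigstep (Sassign2 x v) sigma o -> bigstep (SC (Cassign x e)) sigma o
  | BAssign2 : forall x v sigma, x \in domf sigma ->
      bigstep (Sassign2 x v) sigma (Oconv sigma.[x <- v])
  | BSeq : forall c1 c2 sigma o1 o, bigstep (SC c1) sigma o1 ->
      bigstep (Sseq2 o1 c2) sigma o -> bigstep (SC (Cseq c1 c2)) sigma o
  | BSeq2 : forall sigma c sigma0 o, bigstep (SC c) sigma o ->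
      bigstep (Sseq2 (Oconv sigma) c) sigma0 o
  | BIf : forall e c1 c2 sigma v o, eval_expr e sigma v ->
      bigstep (Sif2 v c1 c2) sigma o -> bigstep (SC (Cif e c1 c2)) sigma o
  | BIf2T : forall v c1 c2 sigma o1, v <> vnat 0 -> bigstep (SC c1) sigma o1 ->
      bigstep (Sif2 v c1 c2) sigma o1
  | BIf2F : forall c1 c2 sigma o2, bigstep (SC c2) sigma o2 ->
      bigstep (Sif2 (vnat 0) c1 c2) sigma o2
  | BWhile : forall e c sigma v o, eval_expr e sigma v ->
      bigstep (Swhile2 v e c) sigma o -> bigstep (SC (Cwhile e c)) sigma o
  | BWhile2T : forall v e c sigma o o', v <> vnat 0 -> bigstep (SC c) sigma o ->
      bigstep (Swhile3 o e c) sigma o' -> bigstep (Swhile2 v e c) sigma o'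
  | BWhile2F : forall e c sigma, bigstep (Swhile2 (vnat 0) e c) sigma (Oconv sigma)
  | BWhile3 : forall sigma e c sigma0 o, bigstep (SC (Cwhile e c)) sigma o ->
      bigstep (Swhile3 (Oconv sigma) e c) sigma0 o
  | BSeq2Div : forall c2 sigma, bigstep (Sseq2 Odiv c2) sigma Odiv
  | BWhile3Div : forall e c sigma, bigstep (Swhile3 Odiv e c) sigma Odiv.

(* Coinductive interpretation of the same rules (=>_E premises stay inductive). *)
CoInductive cobigstep : scmd -> store -> outcome -> Prop :=
  | CBSkip : forall sigma, cobigstep (SC Cskip) sigma (Oconv sigma)
  | CBAlloc : forall x sigma, x \notin domf sigma ->
      cobigstep (SC (Calloc x)) sigma (Oconv sigma.[x <- vnull])
  | CBAssign : forall x e sigma v o, eval_expr e sigma v ->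
      cobigstep (Sassign2 x v) sigma o -> cobigstep (SC (Cassign x e)) sigma o
  | CBAssign2 : forall x v sigma, x \in domf sigma ->
      cobigstep (Sassign2 x v) sigma (Oconv sigma.[x <- v])
  | CBSeq : forall c1 c2 sigma o1 o, cobigstep (SC c1) sigma o1 ->
      cobigstep (Sseq2 o1 c2) sigma o -> cobigstep (SC (Cseq c1 c2)) sigma o
  | CBSeq2 : forall sigma c sigma0 o, cobigstep (SC c) sigma o ->
      cobigstep (Sseq2 (Oconv sigma) c) sigma0 o
  | CBIf : forall e c1 c2 sigma v o, eval_expr e sigma v ->
      cobigstep (Sif2 v c1 c2) sigma o -> cobigstep (SC (Cif e c1 c2)) sigma o
  | CBIf2T : forall v c1 c2 sigma o1, v <> vnat 0 -> cobigstep (SC c1) sigma o1 ->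
      cobigstep (Sif2 v c1 c2) sigma o1
  | CBIf2F : forall c1 c2 sigma o2, cobigstep (SC c2) sigma o2 ->
      cobigstep (Sif2 (vnat 0) c1 c2) sigma o2
  | CBWhile : forall e c sigma v o, eval_expr e sigma v ->
      cobigstep (Swhile2 v e c) sigma o -> cobigstep (SC (Cwhile e c)) sigma o
  | CBWhile2T : forall v e c sigma o o', v <> vnat 0 -> cobigstep (SC c) sigma o ->
      cobigstep (Swhile3 o e c) sigma o' -> cobigstep (Swhile2 v e c) sigma o'
  | CBWhile2F : forall e c sigma, cobigstep (Swhile2 (vnat 0) e c) sigma (Oconv sigma)
  | CBWhile3 : forall sigma e c sigma0 o, cobigstep (SC (Cwhile e c)) sigma o ->
      cobigstep (Swhile3 (Oconv sigma) e c) sigma0 o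
  | CBSeq2Div : forall c2 sigma, cobigstep (Sseq2 Odiv c2) sigma Odiv
  | CBWhile3Div : forall e c sigma, cobigstep (Swhile3 Odiv e c) sigma Odiv.

From mathcomp Require Import all_boot finmap.
From Stdlib Require Import Classical.

(* A coinductive derivation with no inductive counterpart has an infinite
   branch, and rewriting every outcome along that branch into [Odiv] yields a
   coinductive derivation of divergence.  At a rule with two derivation
   premises the branch is chosen classically: if the first premise has an
   inductive derivation, the second one cannot, so we follow the second;
   otherwise we follow the first, and the second premise becomes
   [Sseq2 Odiv _] or [Swhile3 Odiv _ _], which diverges by an axiom. *)

Lemma cobigstep_div_of_not_bigstep :
  forall C sigma o, cobigstep C sigma o -> ~ bigstep C sigma o ->
  cobigstep C sigma Odiv.
Proof.
cofix IH => C sigma o; case=> {C sigma o}.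
- by move=> sigma N; case: N; constructor.
- by move=> x sigma Hx N; case: N; constructor.
- move=> x e sigma v o Hv H N.
  by apply: (CBAssign Hv (IH _ _ _ H _)) => B; apply: N; apply: BAssign Hv B.
- by move=> x v sigma Hx N; case: N; constructor.
- move=> c1 c2 sigma o1 o H1 H2 N.
  (* A plain [destruct] keeps the corecursive calls visibly guarded;
     ssreflect's [case:] would hide them under an eliminator redex. *)
  destruct (classic (bigstep (SC c1) sigma o1)) as [B1 | nB1].
  + by apply: (CBSeq H1 (IH _ _ _ H2 _)) => B2; apply: N; apply: BSeq B1 B2.
  + exact: CBSeq (IH _ _ _ H1 nB1) (CBSeq2Div _ _).
- move=> sigma c sigma0 o H N.
  by apply: (CBSeq2 _ (IH _ _ _ H _)) => B; apply: N; apply: BSeq2.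
- move=> e c1 c2 sigma v o Hv H N.
  by apply: (CBIf Hv (IH _ _ _ H _)) => B; apply: N; apply: BIf Hv B.
- move=> v c1 c2 sigma o1 Hv H N.
  by apply: (CBIf2T _ Hv (IH _ _ _ H _)) => B; apply: N; apply: BIf2T.
- move=> c1 c2 sigma o2 H N.
  by apply: (CBIf2F _ (IH _ _ _ H _)) => B; apply: N; apply: BIf2F.
- move=> e c sigma v o Hv H N.
  by apply: (CBWhile Hv (IH _ _ _ H _)) => B; apply: N; apply: BWhile Hv B.
- move=> v e c sigma o o' Hv H1 H2 N.
  destruct (classic (bigstep (SC c) sigma o)) as [B1 | nB1].
  + apply: (CBWhile2T Hv H1 (IH _ _ _ H2 _)) => B2.
    by apply: N; apply: BWhile2T Hv B1 B2.
  + exact: CBWhile2T Hv (IH _ _ _ H1 nB1) (CBWhile3Div _ _ _).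
- by move=> e c sigma N; case: N; constructor.
- move=> sigma e c sigma0 o H N.
  by apply: (CBWhile3 _ (IH _ _ _ H _)) => B; apply: N; apply: BWhile3.
- by move=> c2 sigma _; constructor.
- by move=> e c sigma _; constructor.
Qed.

Theorem lemma14 (c : cmd) (sigma : store) (o : outcome) :
  cobigstep (SC c) sigma o -> ~ bigstep (SC c) sigma o ->
  cobigstep (SC c) sigma Odiv.
Proof. exact: cobigstep_div_of_not_bigstep. Qed.
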